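(* Let $r:\mathbb{R}\to\mathbb{R}$ and let $\pi^m(a)=\sum_{k=1}^Nw_k\pi^{c_k}(a)$ with $\pi^{c_k}(a)=\mathcal N(a;\mu_k,\sigma_k^2)$, parameters $\theta=(\mu_1,\sigma_1,\dots,\mu_N,\sigma_N,w_1,\dots,w_N)$. Let $\hat\partial^{LR}_{\vartheta}J(\pi^m)=\partial_\vartheta\log\pi^m(A)\,r(A)$ with $A\sim\pi^m$, and for a single component let $\hat\partial^{LR}_{\vartheta_k}J(\pi^{c_k})=\partial_{\vartheta_k}\log\pi^{c_k}(A)\,r(A)$. Let $\rho_k(A)=\pi^{c_k}(A)/\pi^m(A)$. Then for each $k$ and each $\vartheta_k\in\{\mu_k,\sigma_k\}$, $$\mathbb{V}_{\pi^m(A)}\big(\hat\partial^{LR}_{\vartheta_k}J(\pi^m)\big)=w_k^2\,\mathbb{V}_{\pi^m(A)}\big(\rho_k(A)\,\hat\partial^{LR}_{\vartheta_k}J(\pi^{c_k})\big),\qquad \mathbb{V}_{\pi^m(A)}\big(\hat\partial^{LR}_{w_k}J(\pi^m)\big)=\mathbb{V}_{\pi^m(A)}\big(\rho_k(A)r(A)\big).$$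
   Context: Bandit setting with objective $J(\pi)=\mathbb{E}_{a\sim\pi}[r(a)]$. $\mathcal N(a;\mu,\sigma^2)$ is the Gaussian density with mean $\mu$ and standard deviation $\sigma$. The weights $w_k$ are treated as free coordinates when differentiating. $\mathbb{V}_q$ denotes variance under $A\sim q$. *)

From HB Require Import structures.
From mathcomp Require Import all_boot all_order all_algebra.
From mathcomp Require Import all_classical all_reals all_analysis.
Set Implicit Arguments. Unset Strict Implicit. Unset Printing Implicit Defensive.
Import Order.TTheory GRing.Theory Num.Theory.
Local Open Scope ring_scope.

Section gmm.
Context {R : realType} {N : nat}.
Implicit Types (w mu sig : 'I_N -> R) (a t : R).

(* component density pi^{c_k}(a) = N(a; mu, sigma^2), sigma = standard deviation *)
Definition gauss (m s a : R) : R := normal_pdf m s a.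

Definition mixpdf w mu sig (a : R) : R := \sum_(k < N) w k * gauss (mu k) (sig k) a.

Definition upd (f : 'I_N -> R) (k : 'I_N) (t : R) : 'I_N -> R :=
  fun j => if j == k then t else f j.

Definition rho w mu sig (k : 'I_N) (a : R) : R :=
  gauss (mu k) (sig k) a / mixpdf w mu sig a.

Definition lr_mix_mu (r : R -> R) w mu sig k (a : R) : R :=
  derive1 (fun t => ln (mixpdf w (upd mu k t) sig a)) (mu k) * r a.
Definition lr_mix_sig (r : R -> R) w mu sig k (a : R) : R :=
  derive1 (fun t => ln (mixpdf w mu (upd sig k t) a)) (sig k) * r a.
Definition lr_mix_w (r : R -> R) w mu sig k (a : R) : R :=
  derive1 (fun t => ln (mixpdf (upd w k t) mu sig a)) (w k) * r a.

Definition lr_comp_mu (r : R -> R) mu sig k (a : R) : R :=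
  derive1 (fun t => ln (gauss t (sig k) a)) (mu k) * r a.
Definition lr_comp_sig (r : R -> R) mu sig k (a : R) : R :=
  derive1 (fun t => ln (gauss (mu k) t a)) (sig k) * r a.

End gmm.

Definition Eq {R : realType} (q X : R -> R) : \bar R :=
  (\int[@lebesgue_measure R]_x (X x * q x)%:E)%E.
Definition Vq {R : realType} (q X : R -> R) : \bar R :=
  (\int[@lebesgue_measure R]_x (((X x - fine (Eq q X)) ^+ 2) * q x)%:E)%E.

From HB Require Import structures.
From mathcomp Require Import all_boot all_order all_algebra.
From mathcomp Require Import all_classical all_reals all_analysis.
From mathcomp Require Import ring.
Import Order.TTheory GRing.Theory Num.Theory.
Local Open Scope ring_scope.

(* Each of mu_k, sig_k, w_k enters the mixture density only through the k-th
   summand, so as a function of that parameter t the density is C + c * G t,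
   with C the sum of the other summands and either c = w_k and G the k-th
   component (for mu_k, sig_k) or c the k-th component and G = id (for w_k).
   Since (ln (C + c G))' = c G' / (C + c G) = c (G / (C + c G)) (ln G)', the
   mixture score is w_k rho_k times the component score, resp. rho_k itself.
   The estimators thus agree pointwise up to the factor w_k >= 0, and
   V(c Y) = c^2 V(Y) for c >= 0.

   Neither Eq nor Vq assumes its integrand measurable, so the scaling of the
   integral is proved from its definition as a supremum of integrals of
   simple functions. *)

Section ereal_scaling.
Local Open Scope ereal_scope.
Context {R : realType}.

Lemma pmuleBr (c : R) (x y : \bar R) : (0 < c)%R ->
  c%:E * (x - y) = c%:E * x - c%:E * y.
Proof.
move=> c0; have cy : c%:E * +oo = +oo by rewrite mulry gtr0_sg // mul1e.
have cNy : c%:E * -oo = -oo by rewrite mulrNy gtr0_sg // mul1e.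
move: x y => [x| |] [y| |]; rewrite /= ?cy ?cNy -?EFinM //=.
by rewrite mulrBr.
Qed.

Lemma fine_ge0Ml (c : R) (x : \bar R) : (0 <= c)%R ->
  fine (c%:E * x) = (c * fine x)%R.
Proof.
rewrite le_eqVlt => /predU1P[<-|c0]; first by rewrite mul0e mul0r.
case: x => [x| |]; [by [] | rewrite mulry | rewrite mulrNy].
all: by rewrite (gtr0_sg c0) mul1e /= mulr0.
Qed.
End ereal_scaling.


Section integral_scaling.
Local Open Scope ereal_scope.
Context d (T : measurableType d) (R : realType).
Variable mu : {measure set T -> \bar R}.
Import HBNNSimple.

Lemma ereal_sup_sintegral_pZl (c : R) (f : T -> \bar R) : (0 < c)%R ->
  ereal_sup [set sintegral mu h | h in
    [set h : {nnsfun T >-> R} | forall x, (h x)%:E <= c%:E * f x]]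
  = c%:E * ereal_sup [set sintegral mu h | h in
    [set h : {nnsfun T >-> R} | forall x, (h x)%:E <= f x]].
Proof.
move=> c0; have ci0 : (0 <= c^-1)%R by rewrite invr_ge0 ltW.
rewrite -ereal_sup_pZl //; congr ereal_sup; apply/seteqP; split.
- move=> _ [h hle <-]; exists (sintegral mu (scale_nnsfun h ci0)).
    exists (scale_nnsfun h ci0) => // x /=.
    rewrite -(@lee_pmul2l _ c%:E) ?lte_fin // -EFinM mulrA mulfV ?gt_eqF //.
    by rewrite mul1r; apply: hle.
  rewrite -[X in _ * X = _]/(sintegral mu (cst c^-1 \* h)%R) sintegralrM.
  by rewrite muleA -EFinM divff ?gt_eqF // mul1e.
- move=> _ [_ [h hle <-] <-]; exists (scale_nnsfun h (ltW c0)) => /=.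
    by move=> x; rewrite EFinM lee_pmul2l ?lte_fin //; apply: hle.
  by rewrite -[X in X = _]/(sintegral mu (cst c \* h)%R) sintegralrM.
Qed.

Lemma integralZl_ge0 (D : set T) (c : R) (f : T -> \bar R) : (0 <= c)%R ->
  \int[mu]_(x in D) (c%:E * f x) = c%:E * \int[mu]_(x in D) f x.
Proof.
rewrite le_eqVlt => /predU1P[<-|c0].
  by rewrite mul0e (eq_integral (fun=> 0)) ?integral0 // => x _; rewrite mul0e.
have Zpatch g : (fun x => c%:E * g x) \_ D = fun x => c%:E * (g \_ D) x.
  by apply/funext => x; rewrite /patch; case: ifP; rewrite ?mule0.
have Zpos g : (fun x => c%:E * g x)^\+ = fun x => c%:E * g^\+ x.
  by apply/funext => x; rewrite !funeposE maxe_pMr ?mule0 ?lee_fin ?ltW.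
have Zneg g : (fun x => c%:E * g x)^\- = fun x => c%:E * g^\- x.
  by apply/funext => x; rewrite !funenegE -muleN maxe_pMr ?mule0 ?lee_fin ?ltW.
by rewrite /integral Zpatch Zpos Zneg !ereal_sup_sintegral_pZl // pmuleBr.
Qed.

End integral_scaling.

Section moments_scaling.
Context {R : realType}.
Variables (q Y : R -> R) (c : R).
Hypothesis c_ge0 : 0 <= c.

Lemma EqZl : Eq q (fun a => c * Y a) = (c%:E * Eq q Y)%E.
Proof.
rewrite /Eq -integralZl_ge0 //; apply: eq_integral => x _.
by rewrite -EFinM mulrA.
Qed.

Lemma VqZl : Vq q (fun a => c * Y a) = ((c ^+ 2)%:E * Vq q Y)%E.
Proof.
rewrite /Vq EqZl fine_ge0Ml // -integralZl_ge0 ?exprn_ge0 //.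
by apply: eq_integral => x _; rewrite -EFinM; congr (_%:E); ring.
Qed.

End moments_scaling.

Section log_derivative.
Context {R : realType}.
Implicit Types (F G : R -> R) (C c x : R).

Lemma derive1_ln F x : derivable F x 1 -> 0 < F x ->
  derive1 (fun t => ln (F t)) x = derive1 F x / F x.
Proof.
move=> dF F0; have [dln Dln] := is_derive1_ln F0.
rewrite (_ : (fun t => ln (F t)) = (@ln R) \o F) // derive1_comp //.
by rewrite derive1E Dln mulrC.
Qed.

Lemma is_derive1_affine C c G x : derivable G x 1 ->
  is_derive x 1 (fun t => C + c * G t) (c * derive1 G x).
Proof.
move=> /derivableP dG; rewrite derive1E.
have := is_deriveD (is_derive_cst C x 1) (is_deriveZ c dG).
by rewrite add0r.
Qed.

Lemma derive1_ln_affine C c G x : derivable G x 1 -> 0 < C + c * G x ->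
  derive1 (fun t => ln (C + c * G t)) x = c * derive1 G x / (C + c * G x).
Proof.
move=> dG H0; have [dH DH] := is_derive1_affine C c G x dG.
by rewrite derive1_ln // derive1E DH.
Qed.

Lemma derive1_ln_affine_ratio C c G x : derivable G x 1 -> 0 < G x ->
  0 < C + c * G x ->
  derive1 (fun t => ln (C + c * G t)) x
    = c * (G x / (C + c * G x) * derive1 (fun t => ln (G t)) x).
Proof.
move=> dG G0 H0; rewrite derive1_ln_affine // derive1_ln //.
by field; rewrite !gt_eqF.
Qed.

End log_derivative.

Section gaussian.
Context {R : realType}.
Implicit Types m s a : R.

Lemma gauss_gt0 m s a : s != 0 -> 0 < gauss m s a.
Proof.
by move=> s0; rewrite /gauss normal_pdfE // mulr_gt0 ?expR_gt0 ?normal_peak_gt0.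
Qed.

Lemma derivable_gauss_mean m s a : s != 0 -> derivable (fun t => gauss t s a) m 1.
Proof.
move=> s0; rewrite /gauss /normal_pdf (negbTE s0).
exact: (derivableM (derivable_cst _ _ _)).
Qed.

Lemma derivable_normal_peak s : s != 0 -> derivable normal_peak s 1.
Proof.
move=> s0; have v_gt0 : 0 < s ^+ 2 * pi *+ 2.
  by rewrite mulrn_wgt0 // mulr_gt0 ?pi_gt0 // exprn_even_gt0.
have [dsqrt _] := is_derive1_sqrt v_gt0.
apply: derivableV; first by rewrite gt_eqF // sqrtr_gt0.
apply/derivable1_diffP/differentiable_comp; last exact/derivable1_diffP.
exact/derivable1_diffP.
Qed.

Lemma derivable_normal_fun_sd m s a : s != 0 ->
  derivable (fun t => normal_fun m t a) s 1.
Proof.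
move=> s0; rewrite /normal_fun.
apply/derivable1_diffP/differentiable_comp; last first.
  exact/derivable1_diffP/derivable_expR.
apply/derivable1_diffP/(derivableM (derivable_cst _ _ _))/derivableV.
  by rewrite mulrn_eq0 expf_eq0 s0.
by apply/derivable1_diffP.
Qed.

Lemma derivable_gauss_sd m s a : s != 0 -> derivable (fun t => gauss m t a) s 1.
Proof.
move=> s0; apply: (@near_eq_derivable _ _ _ (normal_peak * normal_fun m ^~ a)).
  by near=> t; rewrite /gauss normal_pdfE //; near: t; exact: open_neq.
exact: derivableM (derivable_normal_peak s s0) (derivable_normal_fun_sd m s a s0).
Unshelve. all: by end_near.
Qed.

End gaussian.

Section parameter_update.
Context {R : realType} {N : nat}.
Implicit Types (f : 'I_N -> R) (k : 'I_N) (t : R).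

Lemma upd_id f k : upd f k (f k) = f.
Proof. by apply/funext => j; rewrite /upd; case: eqP => [->|]. Qed.

Lemma sum_upd (F : 'I_N -> R -> R) f k t :
  \sum_(j < N) F j (upd f k t j) = \sum_(j < N | j != k) F j (f j) + F k t.
Proof.
rewrite (bigD1 k) //= addrC /upd eqxx; congr (_ + _).
by apply: eq_bigr => j /negbTE ->.
Qed.

End parameter_update.

Lemma mixpdf_gt0 {R : realType} {N : nat} (w mu sig : 'I_N -> R) a :
  (forall j, sig j != 0) -> (forall j, 0 <= w j) -> \sum_(j < N) w j = 1 ->
  0 < mixpdf w mu sig a.
Proof.
move=> sig_neq0 w_ge0 w_sum1.
have term_ge0 j : 0 <= w j * gauss (mu j) (sig j) a.
  by rewrite mulr_ge0 // ltW // gauss_gt0.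
rewrite lt0r sumr_ge0 ?andbT //.
apply/eqP => /(psumr_eq0P (fun j _ => term_ge0 j)) mix0.
suff : \sum_(j < N) w j = 0 by rewrite w_sum1 => /eqP; rewrite oner_eq0.
apply: big1 => j _; have /eqP := mix0 j isT.
by rewrite mulf_eq0 (gt_eqF (gauss_gt0 _ _ _ (sig_neq0 j))) orbF => /eqP.
Qed.

Section mixture_scores.
Context {R : realType} {N : nat}.
Variables (r : R -> R) (w mu sig : 'I_N -> R) (k : 'I_N).
Hypothesis mixpdf_pos : forall a, 0 < mixpdf w mu sig a.

Let rest a := \sum_(j < N | j != k) w j * gauss (mu j) (sig j) a.

Let mixpdf_upd_mu a t :
  mixpdf w (upd mu k t) sig a = rest a + w k * gauss t (sig k) a.
Proof. exact: (sum_upd (fun j m => w j * gauss m (sig j) a)). Qed.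

Let mixpdf_upd_sig a t :
  mixpdf w mu (upd sig k t) a = rest a + w k * gauss (mu k) t a.
Proof. exact: (sum_upd (fun j s => w j * gauss (mu j) s a)). Qed.

Let mixpdf_upd_w a t :
  mixpdf (upd w k t) mu sig a = rest a + gauss (mu k) (sig k) a * t.
Proof.
by rewrite mulrC; exact: (sum_upd (fun j v => v * gauss (mu j) (sig j) a)).
Qed.

Lemma lr_mix_muE : sig k != 0 ->
  lr_mix_mu r w mu sig k =
    fun a => w k * (rho w mu sig k a * lr_comp_mu r mu sig k a).
Proof.
move=> sk0; apply/funext => a; rewrite /lr_mix_mu /lr_comp_mu /rho.
have mixE : mixpdf w mu sig a = rest a + w k * gauss (mu k) (sig k) a.
  by rewrite -{1}(upd_id mu k) mixpdf_upd_mu.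
under eq_fun do rewrite mixpdf_upd_mu.
rewrite derive1_ln_affine_ratio -?mixE ?mixpdf_pos ?gauss_gt0 //.
  by rewrite !mulrA.
exact: derivable_gauss_mean.
Qed.

Lemma lr_mix_sigE : sig k != 0 ->
  lr_mix_sig r w mu sig k =
    fun a => w k * (rho w mu sig k a * lr_comp_sig r mu sig k a).
Proof.
move=> sk0; apply/funext => a; rewrite /lr_mix_sig /lr_comp_sig /rho.
have mixE : mixpdf w mu sig a = rest a + w k * gauss (mu k) (sig k) a.
  by rewrite -{1}(upd_id sig k) mixpdf_upd_sig.
under eq_fun do rewrite mixpdf_upd_sig.
rewrite derive1_ln_affine_ratio -?mixE ?mixpdf_pos ?gauss_gt0 //.
  by rewrite !mulrA.
exact: derivable_gauss_sd.
Qed.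

Lemma lr_mix_wE : lr_mix_w r w mu sig k = fun a => rho w mu sig k a * r a.
Proof.
apply/funext => a; rewrite /lr_mix_w /rho.
have mixE : mixpdf w mu sig a = rest a + gauss (mu k) (sig k) a * id (w k).
  by rewrite -{1}(upd_id w k) mixpdf_upd_w.
under eq_fun do rewrite mixpdf_upd_w.
rewrite (derive1_ln_affine _ _ id) -?mixE ?mixpdf_pos //.
by rewrite derive1_id mulr1.
Qed.

End mixture_scores.

Theorem lemmaC6 (R : realType) (N : nat) (r : R -> R)
  (w mu sig : 'I_N -> R) :
  measurable_fun [set: R] r ->
  (forall k, 0 < sig k) ->
  (forall k, 0 <= w k) -> \sum_(k < N) w k = 1 ->
  forall k : 'I_N,
    [/\ Vq (mixpdf w mu sig) (lr_mix_mu r w mu sig k)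
          = mule (w k ^+ 2)%:E
             (Vq (mixpdf w mu sig)
                (fun a => rho w mu sig k a * lr_comp_mu r mu sig k a)),
        Vq (mixpdf w mu sig) (lr_mix_sig r w mu sig k)
          = mule (w k ^+ 2)%:E
             (Vq (mixpdf w mu sig)
                (fun a => rho w mu sig k a * lr_comp_sig r mu sig k a))
      & Vq (mixpdf w mu sig) (lr_mix_w r w mu sig k)
          = Vq (mixpdf w mu sig) (fun a => rho w mu sig k a * r a)].
Proof.
move=> _ sig_gt0 w_ge0 w_sum1 k.
have sig_neq0 j : sig j != 0 by rewrite gt_eqF.
have mix_gt0 a : 0 < mixpdf w mu sig a by exact: mixpdf_gt0.
rewrite (lr_mix_muE r w mu sig k mix_gt0 (sig_neq0 k)).
rewrite (lr_mix_sigE r w mu sig k mix_gt0 (sig_neq0 k)).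
by rewrite (lr_mix_wE r w mu sig k mix_gt0) !VqZl.
Qed.
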